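(* Let $\eta\in(0,1)$ and $\epsilon>0$. There exists $N_0$ such that for every Sawtooth model with $n\ge N_0+4$ upper particles, every $2\le r\le n-N_0$ and every $y\in[0,1]$, $$\mathbb P\Big(\bigcup_{r\le i\le r+N_0}\{X_i<\eta\}\ \Big|\ Y_{r+N_0}=y\Big)\ge1-\epsilon.$$
   Context: A (type $--$) Sawtooth model with $n\ge1$ upper particles is specified by functions $f_1,g_1,\dots,f_n,g_n:[0,1]\to[0,\infty)$, each nondecreasing, $C^1$ and not identically zero. It is the probability space $[0,1]^{n+1}\times[0,1]^n$ with probability density at $(x_1,\dots,x_{n+1},y_1,\dots,y_n)$ equal to $\frac{1}{\mathcal V}\prod_{i=1}^n\mathbf 1_{\{x_i\le y_i\}}\mathbf 1_{\{x_{i+1}\le y_i\}}f_i(y_i-x_i)\,g_i(y_i-x_{i+1})$, $\mathcal V$ being the normalizing constant; lower particles $X_1,\dots,X_{n+1}$, upper particles $Y_1,\dots,Y_n$. Conditional probabilities given $Y_j=y$ are computed from the joint density. *)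

From Stdlib Require Import Reals Lra List Classical ClassicalEpsilon.
Import ListNotations.
Open Scope R_scope.

(* Total Riemann integral on [a,b]: the Riemann integral if f is Riemann
   integrable, 0 otherwise (RiemannInt does not depend on the proof). *)
Definition Rint (f : R -> R) (a b : R) : R :=
  match excluded_middle_informative
          (exists I, exists pr : Riemann_integrable f a b, RiemannInt pr = I) with
  | left h => proj1_sig (constructive_indefinite_description _ h)
  | right _ => 0
  end.

(* Iterated integral over [0,1]^k of F, where the integration variables are
   the coordinates 1..k of v : nat -> R (other coordinates are 0). *)
Fixpoint intcube (k : nat) (F : (nat -> R) -> R) : R :=
  match k with
  | O => F (fun _ => 0)
  | S k' => Rint (fun t => intcube k'
               (fun v => F (fun i => if Nat.eqb i k then t else v i))) 0 1
  end.

Definition ind_le (a b : R) : R := if Rle_dec a b then 1 else 0.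

Definition admissible (h : R -> R) : Prop :=
  (forall t, 0 <= t <= 1 -> 0 <= h t) /\
  (forall s t, 0 <= s -> s <= t -> t <= 1 -> h s <= h t) /\
  (exists dh : R -> R,
      (forall t, 0 <= t <= 1 -> derivable_pt_lim h t (dh t)) /\
      (forall t, 0 <= t <= 1 -> continuity_pt dh t)) /\
  (exists t, 0 <= t <= 1 /\ h t <> 0).

Definition sawtooth_fns (n : nat) (f g : nat -> R -> R) : Prop :=
  forall i, (1 <= i <= n)%nat -> admissible (f i) /\ admissible (g i).

Definition dens (n : nat) (f g : nat -> R -> R) (x y : nat -> R) : R :=
  fold_right Rmult 1
    (map (fun i => ind_le (x i) (y i) * ind_le (x (S i)) (y i)
                   * f i (y i - x i) * g i (y i - x (S i)))
         (seq 1 n)).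

Definition upd (w : nat -> R) (j : nat) (y : R) : nat -> R :=
  fun i => if Nat.eqb i j then y else w i.

(* Integral of A(x) * density with Y_j fixed to y, over all other variables
   (the coordinate w_j is a dummy variable, contributing a factor 1). *)
Definition cond_int (n : nat) (f g : nat -> R -> R) (j : nat) (y : R)
  (A : (nat -> R) -> R) : R :=
  intcube (n + 1) (fun x => intcube n (fun w => A x * dens n f g x (upd w j y))).

(* Marginal (unnormalized) density of Y_j at y. *)
Definition cond_den (n : nat) (f g : nat -> R -> R) (j : nat) (y : R) : R :=
  cond_int n f g j y (fun _ => 1).

(* P(event A on lower particles | Y_j = y), A given by its indicator. *)
Definition cond_prob (n : nat) (f g : nat -> R -> R) (j : nat) (y : R)
  (A : (nat -> R) -> R) : R :=
  cond_int n f g j y A / cond_den n f g j y.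

Definition some_below (eta : R) (r N0 : nat) (x : nat -> R) : R :=
  if existsb (fun i => if Rlt_dec (x i) eta then true else false)
             (seq r (S N0)) then 1 else 0.

(* Integrating out the upper particles with Y_j pinned to y leaves a weight
   W(x) on the lower particles which is nonincreasing in every coordinate:
   every factor [ind_le x_i y_i * f_i (y_i - x_i)] of the density decreases in
   x_i, because f_i is nondecreasing.  For a nonincreasing function Phi on
   [0,1] one has eta * int_0^1 Phi <= int_0^eta Phi, so under a coordinatewise
   nonincreasing weight each coordinate falls below eta with relative mass at
   least eta, and this survives conditioning the other coordinates.  Peeling
   off one coordinate at a time, the W-mass of "X_i >= eta for all i in L" is
   at most (1 - eta)^|L| times the total mass, whatever n, f, g, r and y are;
   it remains to take N0 with (1 - eta)^(N0+1) < eps. *)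

From Stdlib Require Import Reals Lra Lia List Classical ClassicalEpsilon RList.
From Coquelicot Require Import Coquelicot.
Open Scope R_scope.

(** * Riemann integrability of monotone functions *)

Definition IsStepFun_const_open (g : R -> R) (a b c : R) (Hab : a <= b)
  (Hg : forall t, a < t < b -> g t = c) : IsStepFun g a b.
Proof.
  exists (a :: b :: nil), (c :: nil).
  repeat split.
  - intros i Hi; simpl in Hi; inversion Hi; [simpl; exact Hab | lia].
  - simpl; unfold Rmin; destruct (Rle_dec a b); lra.
  - simpl; unfold Rmax; destruct (Rle_dec a b); lra.
  - intros i Hi t Ht; simpl in Hi; inversion Hi; [subst; apply Hg, Ht | lia].
Defined.

Lemma RiemannInt_SF_const_open g a b c Hab Hg :
  RiemannInt_SF (mkStepFun (IsStepFun_const_open g a b c Hab Hg)) = c * (b - a).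
Proof.
  unfold RiemannInt_SF, subdivision, subdivision_val; simpl.
  destruct (Rle_dec a b); [ring | lra].
Qed.

Definition IsStepFun_ext_open (g g' : R -> R) (a b : R) (Hab : a <= b)
  (pr : IsStepFun g a b) (He : forall t, a < t < b -> g' t = g t) : IsStepFun g' a b.
Proof.
  destruct pr as [l [lf (Hord & Hfirst & Hlast & Hlen & Hconst)]].
  exists l, lf; repeat split; auto.
  intros i Hi t Ht.
  unfold Rmin, Rmax in Hfirst, Hlast; destruct (Rle_dec a b); [|lra].
  assert (pos_Rl l 0 <= pos_Rl l i) by (apply RList_P6; auto; lia).
  assert (pos_Rl l (S i) <= pos_Rl l (pred (length l))) by (apply RList_P6; auto; lia).
  unfold open_interval in Ht; rewrite He by lra; apply (Hconst i Hi t Ht).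
Defined.

Lemma RiemannInt_SF_ext_open g g' a b Hab pr He :
  RiemannInt_SF (mkStepFun (IsStepFun_ext_open g g' a b Hab pr He))
  = RiemannInt_SF (mkStepFun pr).
Proof.
  apply Rle_antisym; apply StepFun_P37; auto; intros t Ht; simpl; rewrite He; lra.
Qed.

Fixpoint left_step (F : R -> R) (N : nat) (a h t : R) : R :=
  match N with
  | O => F a
  | S N' => if Rlt_dec t (a + h) then F a else left_step F N' (a + h) h t
  end.

Fixpoint left_sum (F : R -> R) (N : nat) (a h : R) : R :=
  match N with
  | O => 0
  | S N' => F a * h + left_sum F N' (a + h) h
  end.

Lemma left_step_StepFun (F : R -> R) (h : R) : 0 <= h -> forall N a b,
  b = a + INR N * h ->
  { pr : IsStepFun (left_step F N a h) a b |
    RiemannInt_SF (mkStepFun pr) = left_sum F N a h }.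
Proof.
  intros Hh; induction N as [|N IH]; intros a b Hb.
  - simpl in Hb.
    unshelve eexists (IsStepFun_const_open _ a b (F a) _ _); [lra | intros; reflexivity |].
    rewrite RiemannInt_SF_const_open, Hb; simpl; ring.
  - assert (Hb' : b = a + h + INR N * h) by (rewrite Hb, S_INR; ring).
    assert (Hmid : a + h <= b) by (pose proof (pos_INR N); nra).
    assert (Hfirst : forall t, a < t < a + h -> left_step F (S N) a h t = F a).
    { intros t Ht; simpl; destruct (Rlt_dec t (a + h)); lra. }
    assert (Hrest : forall t, a + h < t < b ->
      left_step F (S N) a h t = left_step F N (a + h) h t).
    { intros t Ht; simpl; destruct (Rlt_dec t (a + h)); [lra | reflexivity]. }
    destruct (IH (a + h) b Hb') as [pr2 Hpr2].
    pose (pr1 := IsStepFun_const_open _ a (a + h) (F a) ltac:(lra) Hfirst).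
    pose (pr2' := IsStepFun_ext_open _ _ _ _ Hmid pr2 Hrest).
    exists (StepFun_P46 pr1 pr2').
    rewrite <- (StepFun_P43 pr1 pr2').
    unfold pr1, pr2'; rewrite RiemannInt_SF_const_open, RiemannInt_SF_ext_open, Hpr2.
    simpl; ring.
Qed.

Section LeftSteps.
Variables (f : R -> R) (a h : R).
Hypothesis f_nondecr : forall s t, a <= s -> s <= t -> f s <= f t.
Hypothesis h_ge0 : 0 <= h.

Definition increment (s : R) : R := f (s + h) - f s.

Lemma left_step_bound : forall N c, a <= c -> forall t, c <= t <= c + INR N * h ->
  left_step f N c h t <= f t <= left_step f N c h t + left_step increment N c h t.
Proof.
  induction N as [|N IH]; intros c Hc t Ht; simpl left_step.
  - simpl in Ht; assert (t = c) by lra; subst; unfold increment.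
    assert (f c <= f (c + h)) by (apply f_nondecr; lra); lra.
  - rewrite S_INR in Ht; pose proof (pos_INR N).
    destruct (Rlt_dec t (c + h)).
    + unfold increment.
      assert (f c <= f t) by (apply f_nondecr; lra).
      assert (f t <= f (c + h)) by (apply f_nondecr; lra); lra.
    + apply IH; nra.
Qed.

Lemma left_sum_increment : forall N c,
  left_sum increment N c h = h * (f (c + INR N * h) - f c).
Proof.
  induction N as [|N IH]; intros c; simpl left_sum.
  - simpl; ring_simplify (c + 0 * h); ring.
  - rewrite IH, S_INR; unfold increment.
    replace (c + h + INR N * h) with (c + (INR N + 1) * h) by ring; ring.
Qed.

End LeftSteps.

Lemma Riemann_integrable_nondecreasing_on_ray (f : R -> R) (a b : R) :
  a <= b -> (forall s t, a <= s -> s <= t -> f s <= f t) -> Riemann_integrable f a b.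
Proof.
  intros Hab Hf eps.
  set (D := (b - a) * (f b - f a)).
  assert (HD : 0 <= D) by (apply Rmult_le_pos; [lra | assert (f a <= f b) by (apply Hf; lra); lra]).
  assert (Hratio : 0 < eps / (D + 1)) by (apply Rdiv_lt_0_compat; [apply cond_pos | lra]).
  destruct (constructive_indefinite_description _ (archimed_cor1 _ Hratio)) as [N [HN HN0]].
  assert (HNpos : 0 < INR N) by (apply lt_0_INR; exact HN0).
  set (h := (b - a) / INR N).
  assert (Hh : 0 <= h) by (apply Rdiv_le_0_compat; lra).
  assert (Hb : b = a + INR N * h) by (unfold h; field; lra).
  destruct (left_step_StepFun f h Hh N a b Hb) as [pr1 _].
  destruct (left_step_StepFun (increment f h) h Hh N a b Hb) as [pr2 Hpr2].
  (* f lies between the left-endpoint step function and that step function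
     plus the step function of increments, whose integral telescopes. *)
  exists (mkStepFun pr1), (mkStepFun pr2); split.
  - intros t Ht; simpl.
    unfold Rmin, Rmax in Ht; destruct (Rle_dec a b); [|lra].
    pose proof (left_step_bound f a h Hf Hh N a (Rle_refl a) t ltac:(lra)).
    rewrite Rabs_right; lra.
  - rewrite Hpr2, left_sum_increment, <- Hb; fold D.
    replace (h * (f b - f a)) with (D / INR N) by (unfold h, D; field; lra).
    rewrite Rabs_right by (apply Rle_ge, Rdiv_le_0_compat; lra).
    apply Rle_lt_trans with (D * (eps / (D + 1))).
    + unfold Rdiv; apply Rmult_le_compat_l; lra.
    + apply Rmult_lt_reg_r with (D + 1); [lra|].
      replace (D * (eps / (D + 1)) * (D + 1)) with (D * eps) by (field; lra).
      pose proof (cond_pos eps); nra.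
Qed.

Lemma ex_RInt_nondecreasing (f : R -> R) (a b : R) : a <= b ->
  (forall s t, a <= s -> s <= t -> t <= b -> f s <= f t) -> ex_RInt f a b.
Proof.
  intros Hab Hf; apply ex_RInt_Reals_1.
  apply Riemann_integrable_ext with (fun t => f (Rmin t b)).
  - intros t Ht; unfold Rmin, Rmax in Ht; destruct (Rle_dec a b); [|lra].
    f_equal; apply Rmin_left; lra.
  - apply Riemann_integrable_nondecreasing_on_ray; [exact Hab|].
    intros s t Hs Hst; apply Hf.
    + apply Rmin_glb; lra.
    + apply Rle_min_compat_r; exact Hst.
    + apply Rmin_r.
Qed.

Lemma ex_RInt_nonincreasing (f : R -> R) (a b : R) : a <= b ->
  (forall s t, a <= s -> s <= t -> t <= b -> f t <= f s) -> ex_RInt f a b.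
Proof.
  intros Hab Hf.
  apply ex_RInt_ext with (fun t => opp (opp (f t))).
  { intros; apply opp_opp. }
  apply (ex_RInt_opp (fun t => opp (f t))), ex_RInt_nondecreasing; [exact Hab|].
  intros s t Hs Hst Ht; specialize (Hf s t Hs Hst Ht); unfold opp; simpl; lra.
Qed.

(** * The total integral [Rint] and a one-dimensional estimate *)

Lemma Rint_RInt (f : R -> R) (a b : R) : ex_RInt f a b -> Rint f a b = RInt f a b.
Proof.
  intros H; unfold Rint.
  destruct (excluded_middle_informative _) as [e|e].
  - destruct (constructive_indefinite_description _ e) as [I [pr <-]]; simpl.
    symmetry; apply RInt_Reals.
  - exfalso; apply e.
    exists (RiemannInt (ex_RInt_Reals_0 _ _ _ H)), (ex_RInt_Reals_0 _ _ _ H); reflexivity.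
Qed.

Lemma Rint_not_ex (f : R -> R) (a b : R) : ~ ex_RInt f a b -> Rint f a b = 0.
Proof.
  intros H; unfold Rint.
  destruct (excluded_middle_informative _) as [e|]; [|reflexivity].
  exfalso; destruct e as [I [pr _]]; apply H, ex_RInt_Reals_1, pr.
Qed.

Lemma Rint_ext (f g : R -> R) (a b : R) :
  (forall t, Rmin a b < t < Rmax a b -> f t = g t) -> Rint f a b = Rint g a b.
Proof.
  intros Hfg.
  destruct (classic (ex_RInt f a b)) as [Hf|Hf].
  - assert (Hg : ex_RInt g a b) by (apply (ex_RInt_ext f); auto).
    rewrite !Rint_RInt by auto; apply RInt_ext; auto.
  - assert (Hg : ~ ex_RInt g a b).
    { intros Hg; apply Hf, (ex_RInt_ext g); auto; intros; symmetry; auto. }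
    rewrite !Rint_not_ex; auto.
Qed.

Lemma Rint_le (f g : R -> R) (a b : R) : a <= b -> ex_RInt f a b -> ex_RInt g a b ->
  (forall t, a < t < b -> f t <= g t) -> Rint f a b <= Rint g a b.
Proof. intros Hab Hf Hg H; rewrite !Rint_RInt by auto; apply RInt_le; auto. Qed.

Lemma Rint_scal (f : R -> R) (a b c : R) : ex_RInt f a b ->
  Rint (fun t => c * f t) a b = c * Rint f a b.
Proof.
  intros Hf; rewrite !Rint_RInt; auto.
  - apply (RInt_scal f a b c); auto.
  - apply (ex_RInt_scal f); auto.
Qed.

Lemma Rint_0 (a b : R) : Rint (fun _ => 0) a b = 0.
Proof.
  rewrite Rint_RInt by apply ex_RInt_const.
  rewrite RInt_const; unfold scal; simpl; unfold mult; simpl; ring.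
Qed.

Lemma RInt_nonincreasing_split (Phi : R -> R) (a b c : R) : a <= b <= c ->
  (forall s t, a <= s -> s <= t -> t <= c -> Phi t <= Phi s) ->
  (b - a) * RInt Phi b c <= (c - b) * RInt Phi a b.
Proof.
  intros Hb HPhi.
  assert (Hab : ex_RInt Phi a b) by (apply ex_RInt_nonincreasing; intros; [lra | apply HPhi; lra]).
  assert (Hbc : ex_RInt Phi b c) by (apply ex_RInt_nonincreasing; intros; [lra | apply HPhi; lra]).
  assert (Hleft : RInt (fun _ => Phi b) a b <= RInt Phi a b)
    by (apply RInt_le; auto; [lra | apply ex_RInt_const | intros; apply HPhi; lra]).
  assert (Hright : RInt Phi b c <= RInt (fun _ => Phi b) b c)
    by (apply RInt_le; auto; [lra | apply ex_RInt_const | intros; apply HPhi; lra]).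
  rewrite RInt_const in Hleft, Hright; unfold scal in Hleft, Hright; simpl in Hleft, Hright;
    unfold mult in Hleft, Hright; simpl in Hleft, Hright.
  assert (0 <= b - a) by lra; assert (0 <= c - b) by lra.
  apply Rle_trans with ((b - a) * ((c - b) * Phi b)); [apply Rmult_le_compat_l; lra|].
  replace ((b - a) * ((c - b) * Phi b)) with ((c - b) * ((b - a) * Phi b)) by ring.
  apply Rmult_le_compat_l; lra.
Qed.

Lemma Rint_threshold_lower_bound (Phi G : R -> R) (eta q : R) :
  0 <= eta <= 1 -> 0 <= q ->
  (forall s t, 0 <= s -> s <= t -> t <= 1 -> Phi t <= Phi s) ->
  ex_RInt G 0 1 ->
  (forall t, 0 < t < eta -> Phi t <= G t) ->
  (forall t, eta < t < 1 -> (1 - q) * Phi t <= G t) ->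
  (1 - (1 - eta) * q) * Rint Phi 0 1 <= Rint G 0 1.
Proof.
  intros Heta Hq HPhi HG Hlow Hhigh.
  assert (HPhi01 : ex_RInt Phi 0 1) by (apply ex_RInt_nonincreasing; auto; lra).
  assert (HPhi1 : ex_RInt Phi 0 eta) by (apply (ex_RInt_Chasles_1 Phi 0 eta 1); auto).
  assert (HPhi2 : ex_RInt Phi eta 1) by (apply (ex_RInt_Chasles_2 Phi 0 eta 1); auto).
  assert (HG1 : ex_RInt G 0 eta) by (apply (ex_RInt_Chasles_1 G 0 eta 1); auto).
  assert (HG2 : ex_RInt G eta 1) by (apply (ex_RInt_Chasles_2 G 0 eta 1); auto).
  rewrite !Rint_RInt by auto.
  rewrite <- (RInt_Chasles Phi 0 eta 1), <- (RInt_Chasles G 0 eta 1) by auto.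
  unfold plus; simpl.
  assert (Hhead : RInt Phi 0 eta <= RInt G 0 eta) by (apply RInt_le; auto; lra).
  assert (Htail : (1 - q) * RInt Phi eta 1 <= RInt G eta 1).
  { change ((1 - q) * RInt Phi eta 1) with (scal (1 - q) (RInt Phi eta 1)).
    rewrite <- (RInt_scal Phi eta 1 (1 - q)) by auto.
    apply RInt_le; auto; [lra | apply (ex_RInt_scal Phi); auto]. }
  pose proof (RInt_nonincreasing_split Phi 0 eta 1 ltac:(lra) HPhi) as Hsplit.
  set (A := RInt Phi 0 eta) in *; set (B := RInt Phi eta 1) in *.
  assert (0 <= q * ((1 - eta) * A - (eta - 0) * B)) by (apply Rmult_le_pos; lra).
  replace ((1 - (1 - eta) * q) * (A + B))
    with (A + (1 - q) * B - q * ((1 - eta) * A - (eta - 0) * B)) by ring.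
  lra.
Qed.

(** * Iterated integrals of monotone functions on the cube *)

Definition in_cube (v : nat -> R) : Prop := forall i, 0 <= v i <= 1.

Definition le_dir (up : bool) (a b : R) : Prop := if up then a <= b else b <= a.

Definition cube_monotone (up : bool) (F : (nat -> R) -> R) : Prop :=
  forall u v, in_cube u -> in_cube v -> (forall i, le_dir up (u i) (v i)) -> F u <= F v.

Definition slice (k : nat) (F : (nat -> R) -> R) (t : R) : R :=
  intcube k (fun v => F (upd v (S k) t)).

Lemma intcube_S (k : nat) (F : (nat -> R) -> R) :
  intcube (S k) F = Rint (slice k F) 0 1.
Proof. reflexivity. Qed.

Lemma in_cube_upd (v : nat -> R) (k : nat) (t : R) :
  in_cube v -> 0 <= t <= 1 -> in_cube (upd v k t).
Proof. intros Hv Ht i; unfold upd; destruct (Nat.eqb i k); auto. Qed.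

Lemma le_dir_refl (up : bool) (a : R) : le_dir up a a.
Proof. destruct up; simpl; lra. Qed.

Lemma cube_monotone_upd (up : bool) (F : (nat -> R) -> R) (k : nat) (t : R) :
  cube_monotone up F -> 0 <= t <= 1 -> cube_monotone up (fun v => F (upd v k t)).
Proof.
  intros HF Ht u v Hu Hv Huv; apply HF; try apply in_cube_upd; auto.
  intros i; unfold upd; destruct (Nat.eqb i k); [apply le_dir_refl | apply Huv].
Qed.

Lemma cube_monotone_upd_le (up : bool) (F : (nat -> R) -> R) (k : nat) (s t : R) :
  cube_monotone up F -> 0 <= s <= 1 -> 0 <= t <= 1 -> le_dir up s t ->
  forall v, in_cube v -> F (upd v k s) <= F (upd v k t).
Proof.
  intros HF Hs Ht Hst v Hv; apply HF; try apply in_cube_upd; auto.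
  intros i; unfold upd; destruct (Nat.eqb i k); [exact Hst | apply le_dir_refl].
Qed.

Lemma ex_RInt_le_dir (up : bool) (f : R -> R) :
  (forall s t, 0 <= s -> s <= t -> t <= 1 -> le_dir up (f s) (f t)) -> ex_RInt f 0 1.
Proof.
  destruct up; intros Hf;
    [apply ex_RInt_nondecreasing | apply ex_RInt_nonincreasing]; auto; lra.
Qed.

Lemma slice_le_dir (k : nat) (up : bool) (F : (nat -> R) -> R) :
  (forall G H, cube_monotone up G -> cube_monotone up H ->
     (forall v, in_cube v -> G v <= H v) -> intcube k G <= intcube k H) ->
  cube_monotone up F ->
  forall s t, 0 <= s -> s <= t -> t <= 1 -> le_dir up (slice k F s) (slice k F t).
Proof.
  intros Hle HF s t Hs Hst Ht.
  destruct up; simpl; apply Hle; try (apply cube_monotone_upd; auto; lra).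
  - apply (cube_monotone_upd_le true); simpl; auto; lra.
  - apply (cube_monotone_upd_le false); simpl; auto; lra.
Qed.

Lemma intcube_le (k : nat) (up : bool) (F G : (nat -> R) -> R) :
  cube_monotone up F -> cube_monotone up G ->
  (forall v, in_cube v -> F v <= G v) -> intcube k F <= intcube k G.
Proof.
  revert up F G; induction k as [|k IH]; intros up F G HF HG HFG.
  - apply HFG; intros i; lra.
  - rewrite !intcube_S; apply Rint_le; [lra | | |].
    + apply (ex_RInt_le_dir up), slice_le_dir; [exact (IH up) | exact HF].
    + apply (ex_RInt_le_dir up), slice_le_dir; [exact (IH up) | exact HG].
    + intros t Ht; apply (IH up); try (apply cube_monotone_upd; auto; lra).
      intros v Hv; apply HFG, in_cube_upd; auto; lra.
Qed.

Lemma slice_monotone (k : nat) (up : bool) (F : (nat -> R) -> R) :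
  cube_monotone up F ->
  forall s t, 0 <= s -> s <= t -> t <= 1 -> le_dir up (slice k F s) (slice k F t).
Proof. apply slice_le_dir, intcube_le. Qed.

Lemma ex_RInt_slice (k : nat) (up : bool) (F : (nat -> R) -> R) :
  cube_monotone up F -> ex_RInt (slice k F) 0 1.
Proof. intros HF; apply (ex_RInt_le_dir up), slice_monotone; exact HF. Qed.

Lemma intcube_ext (k : nat) (F G : (nat -> R) -> R) :
  (forall v, in_cube v -> F v = G v) -> intcube k F = intcube k G.
Proof.
  revert F G; induction k as [|k IH]; intros F G HFG.
  - apply HFG; intros i; lra.
  - rewrite !intcube_S; apply Rint_ext; intros t Ht.
    rewrite Rmin_left, Rmax_right in Ht by lra.
    apply IH; intros v Hv; apply HFG, in_cube_upd; auto; lra.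
Qed.

Lemma intcube_0 (k : nat) : intcube k (fun _ => 0) = 0.
Proof.
  induction k as [|k IH]; [reflexivity|].
  rewrite intcube_S; transitivity (Rint (fun _ => 0) 0 1); [|apply Rint_0].
  apply Rint_ext; intros; exact IH.
Qed.

Lemma intcube_nonneg (k : nat) (up : bool) (F : (nat -> R) -> R) :
  cube_monotone up F -> (forall v, in_cube v -> 0 <= F v) -> 0 <= intcube k F.
Proof.
  intros HF HF0; rewrite <- (intcube_0 k); apply (intcube_le k up); auto.
  intros u v _ _ _; lra.
Qed.

Lemma intcube_scal (k : nat) (up : bool) (F : (nat -> R) -> R) (c : R) :
  cube_monotone up F -> intcube k (fun v => c * F v) = c * intcube k F.
Proof.
  revert F; induction k as [|k IH]; intros F HF; [reflexivity|].
  rewrite !intcube_S, <- Rint_scal by (apply (ex_RInt_slice k up); exact HF).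
  apply Rint_ext; intros t Ht; rewrite Rmin_left, Rmax_right in Ht by lra.
  apply IH, cube_monotone_upd; auto; lra.
Qed.

(** * Mass of the event that some listed coordinate is below eta *)

Definition below (eta : R) (v : nat -> R) (i : nat) : bool :=
  if Rlt_dec (v i) eta then true else false.

Definition any_below (eta : R) (L : list nat) (v : nat -> R) : R :=
  if existsb (below eta v) L then 1 else 0.

Definition drop_index (k : nat) (L : list nat) : list nat :=
  filter (fun i => negb (Nat.eqb i k)) L.

Lemma drop_index_notin (k : nat) (L : list nat) : ~ In k L -> drop_index k L = L.
Proof.
  induction L as [|i L IH]; simpl; intros H; [reflexivity|].
  destruct (Nat.eqb_spec i k); [tauto | simpl; rewrite IH; tauto].
Qed.

Lemma length_drop_index (k : nat) (L : list nat) : NoDup L -> In k L ->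
  length L = S (length (drop_index k L)).
Proof.
  induction L as [|i L IH]; simpl; intros Hnd Hk; [tauto|].
  inversion Hnd; subst.
  destruct (Nat.eqb_spec i k) as [<-|Hne]; simpl.
  - rewrite drop_index_notin; auto.
  - rewrite IH; [reflexivity | auto | destruct Hk; [congruence | auto]].
Qed.

Lemma In_drop_index (k i : nat) (L : list nat) : In i (drop_index k L) -> In i L /\ i <> k.
Proof.
  intros H; apply filter_In in H; destruct H as [HL Hk].
  split; [exact HL | apply Nat.eqb_neq, Bool.negb_true_iff, Hk].
Qed.

Lemma existsb_below_upd (eta t : R) (v : nat -> R) (k : nat) (L : list nat) :
  ~ t < eta -> existsb (below eta (upd v k t)) L = existsb (below eta v) (drop_index k L).
Proof.
  intros Ht; induction L as [|i L IH]; [reflexivity|].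
  unfold drop_index in *; cbn [filter existsb].
  destruct (Nat.eqb_spec i k) as [->|Hne]; cbn [negb existsb].
  - replace (below eta (upd v k t) k) with false; [exact IH|].
    unfold below, upd; rewrite Nat.eqb_refl; destruct (Rlt_dec t eta); tauto.
  - replace (below eta (upd v k t) i) with (below eta v i); [rewrite IH; reflexivity|].
    unfold below, upd; apply Nat.eqb_neq in Hne; rewrite Hne; reflexivity.
Qed.

Lemma any_below_upd_notin (eta t : R) (v : nat -> R) (k : nat) (L : list nat) :
  ~ In k L -> any_below eta L (upd v k t) = any_below eta L v.
Proof.
  intros Hk; unfold any_below.
  replace (existsb (below eta (upd v k t)) L) with (existsb (below eta v) L); [reflexivity|].
  induction L as [|i L IH]; [reflexivity|]; cbn [existsb]; simpl in Hk.
  rewrite IH by tauto; f_equal; unfold below, upd.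
  destruct (Nat.eqb_spec i k); [tauto | reflexivity].
Qed.

Lemma any_below_upd_lt (eta t : R) (v : nat -> R) (k : nat) (L : list nat) :
  In k L -> t < eta -> any_below eta L (upd v k t) = 1.
Proof.
  intros Hk Ht; unfold any_below.
  replace (existsb _ L) with true; [reflexivity|]; symmetry.
  apply existsb_exists; exists k; split; [exact Hk|].
  unfold below, upd; rewrite Nat.eqb_refl; destruct (Rlt_dec t eta); tauto.
Qed.

Lemma any_below_upd_ge (eta t : R) (v : nat -> R) (k : nat) (L : list nat) :
  ~ t < eta -> any_below eta L (upd v k t) = any_below eta (drop_index k L) v.
Proof. intros Ht; unfold any_below; rewrite existsb_below_upd; auto. Qed.

Lemma any_below_nonincreasing (eta : R) (L : list nat) (u v : nat -> R) :
  (forall i, v i <= u i) -> any_below eta L u <= any_below eta L v.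
Proof.
  intros Huv; unfold any_below.
  destruct (existsb (below eta u) L) eqn:Eu; [|destruct (existsb (below eta v) L); lra].
  replace (existsb (below eta v) L) with true; [lra|]; symmetry.
  apply existsb_exists in Eu; destruct Eu as [i [Hi Hui]].
  apply existsb_exists; exists i; split; [exact Hi|].
  unfold below in *; specialize (Huv i).
  destruct (Rlt_dec (u i) eta); [|discriminate].
  destruct (Rlt_dec (v i) eta); [reflexivity | lra].
Qed.

Lemma cube_monotone_any_below (eta : R) (L : list nat) (F : (nat -> R) -> R) :
  cube_monotone false F -> (forall v, in_cube v -> 0 <= F v) ->
  cube_monotone false (fun v => any_below eta L v * F v).
Proof.
  intros HF HF0 u v Hu Hv Huv.
  assert (Hbelow : any_below eta L u <= any_below eta L v)
    by (apply any_below_nonincreasing; exact Huv).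
  assert (0 <= any_below eta L u) by (unfold any_below; destruct existsb; lra).
  assert (any_below eta L v <= 1) by (unfold any_below; destruct existsb; lra).
  pose proof (HF u v Hu Hv Huv); pose proof (HF0 u Hu); pose proof (HF0 v Hv).
  apply Rle_trans with (any_below eta L v * F u);
    [apply Rmult_le_compat_r | apply Rmult_le_compat_l]; lra.
Qed.

Lemma intcube_any_below (eta : R) (k : nat) (L : list nat) (F : (nat -> R) -> R) :
  0 < eta < 1 -> cube_monotone false F -> (forall v, in_cube v -> 0 <= F v) ->
  NoDup L -> (forall i, In i L -> (1 <= i <= k)%nat) ->
  (1 - (1 - eta) ^ length L) * intcube k F
  <= intcube k (fun v => any_below eta L v * F v).
Proof.
  intros Heta; revert L F; induction k as [|k IH]; intros L F HF HF0 HL Hrange.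
  - destruct L as [|i L]; [simpl; unfold any_below; simpl; lra|].
    specialize (Hrange i (or_introl eq_refl)); lia.
  - assert (HFt : forall t, 0 <= t <= 1 -> cube_monotone false (fun v => F (upd v (S k) t)))
      by (intros; apply cube_monotone_upd; auto).
    assert (HFt0 : forall t, 0 <= t <= 1 -> forall v, in_cube v -> 0 <= F (upd v (S k) t))
      by (intros; apply HF0, in_cube_upd; auto).
    assert (HFA : cube_monotone false (fun v => any_below eta L v * F v))
      by (apply cube_monotone_any_below; auto).
    rewrite !intcube_S.
    (* Below eta a listed top coordinate realises the event by itself; above
       eta the event is that of the remaining listed coordinates. *)
    destruct (in_dec Nat.eq_dec (S k) L) as [Hin|Hout].
    + rewrite (length_drop_index (S k) L) by auto; simpl pow.
      apply Rint_threshold_lower_bound; [lra | apply pow_le; lra | | | |].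
      * intros s t Hs Hst Ht; apply (slice_monotone k false F); auto.
      * apply (ex_RInt_slice k false); exact HFA.
      * intros t Ht; apply Req_le, intcube_ext; intros v Hv.
        rewrite any_below_upd_lt by (auto; lra); ring.
      * intros t Ht; unfold slice.
        rewrite (intcube_ext k (fun v => any_below eta L (upd v (S k) t) * F (upd v (S k) t))
                   (fun v => any_below eta (drop_index (S k) L) v * F (upd v (S k) t)))
          by (intros; rewrite any_below_upd_ge by lra; reflexivity).
        apply IH; [apply HFt; lra | apply HFt0; lra | apply NoDup_filter, HL |].
        intros i Hi; apply In_drop_index in Hi; destruct Hi as [Hi Hne].
        specialize (Hrange i Hi); lia.
    + rewrite <- Rint_scal by (apply (ex_RInt_slice k false); exact HF).
      apply Rint_le; [lra | apply (ex_RInt_scal (slice k F)), (ex_RInt_slice k false); exact HF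
                     | apply (ex_RInt_slice k false); exact HFA |].
      intros t Ht; unfold slice.
      rewrite (intcube_ext k (fun v => any_below eta L (upd v (S k) t) * F (upd v (S k) t))
                 (fun v => any_below eta L v * F (upd v (S k) t)))
        by (intros; rewrite any_below_upd_notin; auto).
      apply IH; [apply HFt; lra | apply HFt0; lra | exact HL |].
      intros i Hi; specialize (Hrange i Hi); assert (i <> S k) by (intros ->; tauto); lia.
Qed.

(** * Monotonicity of the Sawtooth density *)

Lemma weight_factor_le (h : R -> R) (a b a' b' : R) : admissible h ->
  0 <= a <= 1 -> 0 <= b <= 1 -> 0 <= a' <= 1 -> 0 <= b' <= 1 -> a' <= a -> b <= b' ->
  0 <= ind_le a b * h (b - a) <= ind_le a' b' * h (b' - a').
Proof.
  intros [Hh0 [Hmono _]] Ha Hb Ha' Hb' Haa Hbb; unfold ind_le.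
  destruct (Rle_dec a b); destruct (Rle_dec a' b'); try lra.
  - assert (0 <= h (b - a)) by (apply Hh0; lra).
    assert (h (b - a) <= h (b' - a')) by (apply Hmono; lra); lra.
  - assert (0 <= h (b' - a')) by (apply Hh0; lra); lra.
Qed.

Lemma fold_right_Rmult_map_le (l : list nat) (T T' : nat -> R) :
  (forall i, In i l -> 0 <= T i <= T' i) ->
  0 <= fold_right Rmult 1 (map T l) <= fold_right Rmult 1 (map T' l).
Proof.
  induction l as [|i l IH]; simpl; intros H; [lra|].
  destruct (H i (or_introl eq_refl)).
  destruct IH as [IH0 IH1]; [intros; apply H; auto|].
  split; [apply Rmult_le_pos | apply Rmult_le_compat]; lra.
Qed.

Lemma dens_le (n : nat) (f g : nat -> R -> R) (x x' Y Y' : nat -> R) :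
  sawtooth_fns n f g -> in_cube x -> in_cube x' -> in_cube Y -> in_cube Y' ->
  (forall i, x' i <= x i) -> (forall i, Y i <= Y' i) ->
  0 <= dens n f g x Y <= dens n f g x' Y'.
Proof.
  intros Hfg Hx Hx' HY HY' Hxx HYY; unfold dens; apply fold_right_Rmult_map_le.
  intros i Hi; apply in_seq in Hi; destruct (Hfg i ltac:(lia)) as [Hf Hg].
  pose proof (weight_factor_le (f i) (x i) (Y i) (x' i) (Y' i) Hf
                (Hx i) (HY i) (Hx' i) (HY' i) (Hxx i) (HYY i)).
  pose proof (weight_factor_le (g i) (x (S i)) (Y i) (x' (S i)) (Y' i) Hg
                (Hx (S i)) (HY i) (Hx' (S i)) (HY' i) (Hxx (S i)) (HYY i)).
  set (p := ind_le (x i) (Y i) * f i (Y i - x i)) in *.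
  set (q := ind_le (x (S i)) (Y i) * g i (Y i - x (S i))) in *.
  set (p' := ind_le (x' i) (Y' i) * f i (Y' i - x' i)) in *.
  set (q' := ind_le (x' (S i)) (Y' i) * g i (Y' i - x' (S i))) in *.
  replace (ind_le (x i) (Y i) * ind_le (x (S i)) (Y i) * f i (Y i - x i) * g i (Y i - x (S i)))
    with (p * q) by (unfold p, q; ring).
  replace (ind_le (x' i) (Y' i) * ind_le (x' (S i)) (Y' i) * f i (Y' i - x' i)
           * g i (Y' i - x' (S i))) with (p' * q') by (unfold p', q'; ring).
  split; [apply Rmult_le_pos | apply Rmult_le_compat]; lra.
Qed.

Definition cond_weight (n : nat) (f g : nat -> R -> R) (j : nat) (y : R) (x : nat -> R) : R :=
  intcube n (fun w => dens n f g x (upd w j y)).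

Section ConditionalWeight.
Variables (n : nat) (f g : nat -> R -> R) (j : nat) (y : R).
Hypothesis fg_sawtooth : sawtooth_fns n f g.
Hypothesis y_range : 0 <= y <= 1.

Lemma cube_monotone_dens_upd (x : nat -> R) : in_cube x ->
  cube_monotone true (fun w => dens n f g x (upd w j y)).
Proof.
  intros Hx u v Hu Hv Huv; apply dens_le; try apply in_cube_upd; auto; [intros; lra|].
  intros i; unfold upd; destruct (Nat.eqb i j); [lra | apply (Huv i)].
Qed.

Lemma cube_monotone_cond_weight : cube_monotone false (cond_weight n f g j y).
Proof.
  intros u v Hu Hv Huv; apply (intcube_le n true); try apply cube_monotone_dens_upd; auto.
  intros w Hw; apply dens_le; try apply in_cube_upd; auto; intros; lra.
Qed.

Lemma cond_weight_nonneg (x : nat -> R) : in_cube x -> 0 <= cond_weight n f g j y x.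
Proof.
  intros Hx; apply (intcube_nonneg n true); [apply cube_monotone_dens_upd; exact Hx|].
  intros w Hw; refine (proj1 (dens_le n f g x x (upd w j y) (upd w j y) _ _ _ _ _ _ _));
    try apply in_cube_upd; auto; intros; lra.
Qed.

Lemma cond_int_weight (A : (nat -> R) -> R) :
  cond_int n f g j y A = intcube (n + 1) (fun x => A x * cond_weight n f g j y x).
Proof.
  apply intcube_ext; intros x Hx.
  apply (intcube_scal n true), cube_monotone_dens_upd; exact Hx.
Qed.

Lemma cond_den_weight : cond_den n f g j y = intcube (n + 1) (cond_weight n f g j y).
Proof.
  unfold cond_den; rewrite cond_int_weight.
  apply intcube_ext; intros; ring.
Qed.

End ConditionalWeight.

Theorem mainTheorem13 (eta eps : R) :
  0 < eta < 1 -> 0 < eps ->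
  exists N0 : nat,
    forall (n : nat) (f g : nat -> R -> R),
      (N0 + 4 <= n)%nat -> sawtooth_fns n f g ->
      forall (r : nat), (2 <= r)%nat -> (r <= n - N0)%nat ->
      forall y : R, 0 <= y <= 1 ->
        0 < cond_den n f g (r + N0) y ->
        cond_prob n f g (r + N0) y (some_below eta r N0) >= 1 - eps.
Proof.
  intros Heta Heps.
  destruct (pow_lt_1_zero (1 - eta) ltac:(rewrite Rabs_right; lra) eps Heps) as [N HN].
  assert (Hsmall : (1 - eta) ^ S N < eps).
  { specialize (HN (S N) ltac:(lia)).
    rewrite Rabs_right in HN by (apply Rle_ge, pow_le; lra); exact HN. }
  exists N; intros n f g Hn Hfg r Hr Hrn y Hy Hden.
  set (W := cond_weight n f g (r + N) y).
  assert (Hmass := intcube_any_below eta (n + 1) (seq r (S N)) W Heta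
    (cube_monotone_cond_weight n f g (r + N) y Hfg Hy)
    (cond_weight_nonneg n f g (r + N) y Hfg Hy) (seq_NoDup _ _)
    ltac:(intros i Hi; apply in_seq in Hi; lia)).
  rewrite length_seq in Hmass.
  unfold cond_prob; rewrite cond_int_weight, cond_den_weight in * by auto.
  fold W in Hden |- *.
  apply Rle_ge, Rle_div_r; [exact Hden|].
  apply Rle_trans with ((1 - (1 - eta) ^ S N) * intcube (n + 1) W); [|exact Hmass].
  apply Rmult_le_compat_r; lra.
Qed.
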